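(* Let $r\in(-\infty,0)\cup(0,1)$, let $n\ge 2$, and let $Y$ be a positive semidefinite $n\times n$ matrix of rank one. Then the map $X\mapsto X^rYX^r$ from $\mathcal{P}_n$ to the $n\times n$ positive semidefinite matrices is not operator convex, i.e. there exist $X_1,X_2\in\mathcal{P}_n$ and $\lambda\in[0,1]$ such that $(\lambda X_1+(1-\lambda)X_2)^rY(\lambda X_1+(1-\lambda)X_2)^r\le \lambda X_1^rYX_1^r+(1-\lambda)X_2^rYX_2^r$ fails in the Loewner order.
   Context: $\mathcal{P}_n$ denotes the set of $n\times n$ positive definite complex matrices. *)

From Stdlib Require Import Reals ClassicalEpsilon.
Open Scope R_scope.

Record C := mkC { Re : R ; Im : R }.
Definition RtoC (x : R) : C := mkC x 0.
Definition C0 : C := RtoC 0.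
Definition C1 : C := RtoC 1.
Definition Cadd (a b : C) : C := mkC (Re a + Re b) (Im a + Im b).
Definition Copp (a : C) : C := mkC (- Re a) (- Im a).
Definition Cmul (a b : C) : C :=
  mkC (Re a * Re b - Im a * Im b) (Re a * Im b + Im a * Re b).
Definition Cconj (a : C) : C := mkC (Re a) (- Im a).

(* ---------- n x n complex matrices ----------
   A matrix is a function nat -> nat -> C; only the entries with
   indices < n are relevant (all operations sum over 0..n-1). *)
Definition Mat := nat -> nat -> C.
Definition Vec := nat -> C.

Fixpoint Csum (n : nat) (f : nat -> C) : C :=
  match n with O => C0 | S m => Cadd (Csum m f) (f m) end.

Definition madd (A B : Mat) : Mat := fun i j => Cadd (A i j) (B i j).
Definition msub (A B : Mat) : Mat := fun i j => Cadd (A i j) (Copp (B i j)).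
Definition mscale (c : R) (A : Mat) : Mat := fun i j => Cmul (RtoC c) (A i j).
Definition mmul (n : nat) (A B : Mat) : Mat :=
  fun i j => Csum n (fun k => Cmul (A i k) (B k j)).
Definition adj (A : Mat) : Mat := fun i j => Cconj (A j i).
Definition idm : Mat := fun i j => if Nat.eqb i j then C1 else C0.
Definition diagm (d : nat -> R) : Mat :=
  fun i j => if Nat.eqb i j then RtoC (d i) else C0.

Definition meq (n : nat) (A B : Mat) : Prop :=
  forall i j, (i < n)%nat -> (j < n)%nat -> A i j = B i j.

Definition quad (n : nat) (A : Mat) (x : Vec) : C :=
  Csum n (fun i => Csum n (fun j => Cmul (Cconj (x i)) (Cmul (A i j) (x j)))).

Definition vnonzero (n : nat) (x : Vec) : Prop := exists i, (i < n)%nat /\ x i <> C0.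

Definition psd (n : nat) (A : Mat) : Prop :=
  forall x : Vec, Im (quad n A x) = 0 /\ 0 <= Re (quad n A x).

Definition pd (n : nat) (A : Mat) : Prop :=
  forall x : Vec, Im (quad n A x) = 0 /\ (vnonzero n x -> 0 < Re (quad n A x)).

Definition loewner_le (n : nat) (A B : Mat) : Prop := psd n (msub B A).

Definition rank_one (n : nat) (Y : Mat) : Prop :=
  exists u w : Vec, vnonzero n u /\ vnonzero n w /\
    meq n Y (fun i j => Cmul (u i) (Cconj (w j))).

(* ---------- Real powers of positive definite matrices ----------
   Spectral decomposition X = U diag(d) U^* with U unitary and d > 0;
   X^r := U diag(d^r) U^*  (functional calculus; independent of the
   chosen decomposition). *)
Definition unitary (n : nat) (U : Mat) : Prop := meq n (mmul n (adj U) U) idm.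

Definition spec_decomp (n : nat) (X : Mat) (p : Mat * (nat -> R)) : Prop :=
  unitary n (fst p) /\ (forall i, (i < n)%nat -> 0 < snd p i) /\
  meq n X (mmul n (mmul n (fst p) (diagm (snd p))) (adj (fst p))).

Definition the_decomp (n : nat) (X : Mat) : Mat * (nat -> R) :=
  epsilon (inhabits (idm, fun _ => 1)) (spec_decomp n X).

Definition mpow (n : nat) (r : R) (X : Mat) : Mat :=
  let p := the_decomp n X in
  mmul n (mmul n (fst p) (diagm (fun i => Rpower (snd p i) r))) (adj (fst p)).

Definition sandwich (n : nat) (r : R) (Y X : Mat) : Mat :=
  mmul n (mmul n (mpow n r X) Y) (mpow n r X).

From Pilot Require Import Defs.
From Stdlib Require Import Reals Lra Lia Psatz Setoid Morphisms Classical ClassicalEpsilon.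
Import Defs.
Open Scope R_scope.

(* Write Y = c u u^* with c > 0.  For X = U diag(d) U^* with U unitary, the quadratic form
   of X^r Y X^r at U z is c |<diag(d^r) z, U^* u>|^2.  After a reflection U in a coordinate
   plane (i, j) that makes (U^* u)_i and (U^* u)_j nonzero, a suitable z turns this into
   c (d_i^r s_i + d_j^r s_j)^2, so operator convexity along such X would give midpoint
   convexity of (a, b) |-> (a^r s_i + b^r s_j)^2, which fails for r < 0 and for 0 < r < 1. *)

Lemma C_ext (a b : C) : Re a = Re b -> Im a = Im b -> a = b.
Proof. destruct a, b; simpl; intros; subst; reflexivity. Qed.

Definition Csub (a b : C) : C := Cadd a (Copp b).

Lemma C_ring : ring_theory C0 C1 Cadd Cmul Csub Copp (@eq C).
Proof.
  constructor; intros; apply C_ext; unfold Csub, C0, C1, RtoC;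
    destruct x; try destruct y; try destruct z; simpl; ring.
Qed.
Add Ring C_ring : C_ring.

Ltac Csolve := apply C_ext; simpl; ring.

Lemma Cconj_add a b : Cconj (Cadd a b) = Cadd (Cconj a) (Cconj b). Proof. Csolve. Qed.
Lemma Cconj_mul a b : Cconj (Cmul a b) = Cmul (Cconj a) (Cconj b). Proof. Csolve. Qed.
Lemma Cconj_involutive a : Cconj (Cconj a) = a. Proof. Csolve. Qed.
Lemma Cconj_RtoC x : Cconj (RtoC x) = RtoC x. Proof. Csolve. Qed.
Lemma RtoC_add x y : RtoC (x + y) = Cadd (RtoC x) (RtoC y). Proof. Csolve. Qed.
Lemma RtoC_mul x y : RtoC (x * y) = Cmul (RtoC x) (RtoC y). Proof. Csolve. Qed.
Lemma RtoC_opp x : RtoC (- x) = Copp (RtoC x). Proof. Csolve. Qed.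

Definition Cnorm2 (a : C) : R := Re a * Re a + Im a * Im a.

Lemma Cnorm2_pos a : a <> C0 -> 0 < Cnorm2 a.
Proof.
  intros Ha; unfold Cnorm2; destruct a as [a1 a2]; simpl.
  destruct (Req_dec a1 0) as [->|H1].
  - destruct (Req_dec a2 0) as [->|H2]; [now destruct Ha|].
    pose proof (Rsqr_pos_lt a2 H2); unfold Rsqr in *; nra.
  - pose proof (Rsqr_pos_lt a1 H1); unfold Rsqr in *; nra.
Qed.

Lemma RtoC_mul_eq0 x a : Cmul (RtoC x) a = C0 -> a <> C0 -> x = 0.
Proof.
  intros H Ha; apply Cnorm2_pos in Ha; destruct a as [a1 a2].
  pose proof (f_equal Re H); pose proof (f_equal Im H).
  unfold Cnorm2 in Ha; simpl in *.
  destruct (Req_dec x 0) as [|Hx]; auto.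
  assert (a1 = 0) by (apply (Rmult_eq_reg_l x); lra).
  assert (a2 = 0) by (apply (Rmult_eq_reg_l x); lra).
  subst; lra.
Qed.

Lemma Csum_ext n f g :
  (forall k, (k < n)%nat -> f k = g k) -> Csum n f = Csum n g.
Proof.
  induction n; simpl; intros H; auto.
  rewrite IHn, H by (intros; try apply H; lia); auto.
Qed.

Lemma Csum_add n f g :
  Csum n (fun k => Cadd (f k) (g k)) = Cadd (Csum n f) (Csum n g).
Proof. induction n; simpl; [Csolve | rewrite IHn; ring]. Qed.

Lemma Csum_mull n a f : Csum n (fun k => Cmul a (f k)) = Cmul a (Csum n f).
Proof. induction n; simpl; [Csolve | rewrite IHn; ring]. Qed.

Lemma Csum_mulr n a f : Csum n (fun k => Cmul (f k) a) = Cmul (Csum n f) a.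
Proof. induction n; simpl; [Csolve | rewrite IHn; ring]. Qed.

Lemma Csum_opp n f : Csum n (fun k => Copp (f k)) = Copp (Csum n f).
Proof. induction n; simpl; [Csolve | rewrite IHn; ring]. Qed.

Lemma Csum_conj n f : Cconj (Csum n f) = Csum n (fun k => Cconj (f k)).
Proof. induction n; simpl; [Csolve | rewrite Cconj_add, IHn; auto]. Qed.

Lemma Csum_eq0 n f : (forall k, (k < n)%nat -> f k = C0) -> Csum n f = C0.
Proof.
  induction n; simpl; intros H; auto.
  rewrite IHn, H by (intros; try apply H; lia); ring.
Qed.

Lemma Csum_swap n m f :
  Csum n (fun i => Csum m (fun j => f i j)) = Csum m (fun j => Csum n (fun i => f i j)).
Proof.
  induction n; simpl; [symmetry; apply Csum_eq0; auto|].
  rewrite IHn, <- Csum_add; auto.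
Qed.

Lemma Csum_single n i f : (i < n)%nat ->
  (forall k, (k < n)%nat -> k <> i -> f k = C0) -> Csum n f = f i.
Proof.
  induction n; intros Hi H; [lia|]; simpl.
  destruct (Nat.eq_dec i n) as [->|].
  - rewrite Csum_eq0 by (intros; apply H; lia); ring.
  - rewrite IHn, (H n) by (try lia; intros; apply H; lia); ring.
Qed.

Lemma Csum_pair n i j f : (i < n)%nat -> (j < n)%nat -> i <> j ->
  (forall k, (k < n)%nat -> k <> i -> k <> j -> f k = C0) ->
  Csum n f = Cadd (f i) (f j).
Proof.
  induction n; intros Hi Hj Hij H; [lia|]; simpl.
  destruct (Nat.eq_dec i n) as [->|]; [|destruct (Nat.eq_dec j n) as [->|]].
  - rewrite (Csum_single n j) by (try lia; intros; apply H; lia); ring.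
  - rewrite (Csum_single n i) by (try lia; intros; apply H; lia); ring.
  - rewrite IHn, (H n) by (try lia; intros; apply H; lia); ring.
Qed.

Lemma Csum_nonneg n f :
  (forall k, (k < n)%nat -> Im (f k) = 0 /\ 0 <= Re (f k)) ->
  Im (Csum n f) = 0 /\ 0 <= Re (Csum n f).
Proof.
  induction n; intros H; simpl; [lra|].
  destruct IHn, (H n); try lia; try (intros; apply H; lia); lra.
Qed.

Lemma Csum_pos n f i :
  (forall k, (k < n)%nat -> Im (f k) = 0 /\ 0 <= Re (f k)) ->
  (i < n)%nat -> 0 < Re (f i) -> Im (Csum n f) = 0 /\ 0 < Re (Csum n f).
Proof.
  induction n; intros H Hi Hp; [lia|]; simpl.
  destruct (H n), (Csum_nonneg n f); try lia; try (intros; apply H; lia).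
  destruct (Nat.eq_dec i n) as [->|]; [lra|].
  destruct IHn; try lia; try (intros; apply H; lia); lra.
Qed.

Definition veq (n : nat) (x y : Vec) : Prop := forall i, (i < n)%nat -> x i = y i.
Definition mv (n : nat) (A : Mat) (x : Vec) : Vec :=
  fun i => Csum n (fun j => Cmul (A i j) (x j)).
Definition dot (n : nat) (x y : Vec) : C := Csum n (fun i => Cmul (Cconj (x i)) (y i)).

Add Parametric Relation n : Mat (meq n)
  reflexivity proved by (fun A i j _ _ => eq_refl)
  symmetry proved by (fun A B H i j Hi Hj => eq_sym (H i j Hi Hj))
  transitivity proved by (fun A B D H1 H2 i j Hi Hj => eq_trans (H1 i j Hi Hj) (H2 i j Hi Hj))
  as meq_rel.

Add Parametric Relation n : Vec (veq n)
  reflexivity proved by (fun x i _ => eq_refl)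
  symmetry proved by (fun x y H i Hi => eq_sym (H i Hi))
  transitivity proved by (fun x y z H1 H2 i Hi => eq_trans (H1 i Hi) (H2 i Hi))
  as veq_rel.

Add Parametric Morphism n : (mmul n) with signature meq n ==> meq n ==> meq n as mmul_mor.
Proof. intros A A' HA B B' HB i j Hi Hj; apply Csum_ext; intros; rewrite HA, HB; auto. Qed.
Add Parametric Morphism n : (quad n) with signature meq n ==> eq ==> eq as quad_mor.
Proof.
  intros A A' HA x; apply Csum_ext; intros; apply Csum_ext; intros; rewrite HA; auto.
Qed.
Add Parametric Morphism n : (mv n) with signature meq n ==> veq n ==> veq n as mv_mor.
Proof. intros A A' HA x x' Hx i Hi; apply Csum_ext; intros; rewrite HA, Hx; auto. Qed.
Add Parametric Morphism n : (dot n) with signature veq n ==> veq n ==> eq as dot_mor.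
Proof. intros x x' Hx y y' Hy; apply Csum_ext; intros; rewrite Hx, Hy; auto. Qed.

Lemma mmul_assoc n A B D : meq n (mmul n (mmul n A B) D) (mmul n A (mmul n B D)).
Proof.
  intros i j Hi Hj; unfold mmul.
  transitivity (Csum n (fun k => Csum n (fun l => Cmul (A i l) (Cmul (B l k) (D k j))))).
  { apply Csum_ext; intros; rewrite <- Csum_mulr; apply Csum_ext; intros; ring. }
  rewrite Csum_swap; apply Csum_ext; intros; rewrite <- Csum_mull; auto.
Qed.

Lemma mv_mmul n A B x : veq n (mv n (mmul n A B) x) (mv n A (mv n B x)).
Proof.
  intros i Hi; unfold mv, mmul.
  transitivity (Csum n (fun j => Csum n (fun k => Cmul (A i k) (Cmul (B k j) (x j))))).
  { apply Csum_ext; intros; rewrite <- Csum_mulr; apply Csum_ext; intros; ring. }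
  rewrite Csum_swap; apply Csum_ext; intros; rewrite <- Csum_mull; auto.
Qed.

Lemma Csum_diagm_l n d i g : (i < n)%nat ->
  Csum n (fun k => Cmul (diagm d i k) (g k)) = Cmul (RtoC (d i)) (g i).
Proof.
  intros Hi; rewrite (Csum_single n i); auto.
  - unfold diagm; rewrite Nat.eqb_refl; auto.
  - intros k _ Hk; unfold diagm; destruct (Nat.eqb_spec i k); [lia|]; Csolve.
Qed.

Lemma Csum_diagm_r n d j g : (j < n)%nat ->
  Csum n (fun k => Cmul (g k) (diagm d k j)) = Cmul (g j) (RtoC (d j)).
Proof.
  intros Hj; rewrite (Csum_single n j); auto.
  - unfold diagm; rewrite Nat.eqb_refl; auto.
  - intros k _ Hk; unfold diagm; destruct (Nat.eqb_spec k j); [lia|]; Csolve.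
Qed.

Lemma idm_diagm : idm = diagm (fun _ => 1).
Proof. reflexivity. Qed.

Lemma mmul_diagm_l n d A : meq n (mmul n (diagm d) A) (fun i j => Cmul (RtoC (d i)) (A i j)).
Proof. intros i j Hi _; exact (Csum_diagm_l n d i (fun k => A k j) Hi). Qed.

Lemma mmul_diagm_r n d A : meq n (mmul n A (diagm d)) (fun i j => Cmul (A i j) (RtoC (d j))).
Proof. intros i j _ Hj; exact (Csum_diagm_r n d j (fun k => A i k) Hj). Qed.

Lemma mv_diagm n d x : veq n (mv n (diagm d) x) (fun k => Cmul (RtoC (d k)) (x k)).
Proof. intros i Hi; apply Csum_diagm_l; auto. Qed.

Lemma mmul_1l n A : meq n (mmul n idm A) A.
Proof. rewrite idm_diagm, mmul_diagm_l; intros i j _ _; Csolve. Qed.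

Lemma mmul_1r n A : meq n (mmul n A idm) A.
Proof. rewrite idm_diagm, mmul_diagm_r; intros i j _ _; Csolve. Qed.

Lemma mv_1 n x : veq n (mv n idm x) x.
Proof. rewrite idm_diagm, mv_diagm; intros i _; Csolve. Qed.

Lemma diagm_mul n a b : meq n (mmul n (diagm a) (diagm b)) (diagm (fun k => a k * b k)).
Proof.
  rewrite mmul_diagm_l; intros i j _ _; unfold diagm.
  destruct (Nat.eqb_spec i j) as [->|]; [rewrite RtoC_mul|]; Csolve.
Qed.

Lemma adj_mmul n A B : meq n (adj (mmul n A B)) (mmul n (adj B) (adj A)).
Proof.
  intros i j _ _; unfold adj, mmul; rewrite Csum_conj.
  apply Csum_ext; intros; rewrite Cconj_mul; ring.
Qed.

Lemma adj_involutive n A : meq n (adj (adj A)) A.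
Proof. intros i j _ _; apply Cconj_involutive. Qed.

Lemma adj_diagm n d : meq n (adj (diagm d)) (diagm d).
Proof.
  intros i j _ _; unfold adj, diagm; rewrite Nat.eqb_sym.
  destruct (Nat.eqb_spec i j) as [->|]; [apply Cconj_RtoC | Csolve].
Qed.

Lemma quad_dot n A x : quad n A x = dot n x (mv n A x).
Proof. unfold quad, dot, mv; apply Csum_ext; intros; rewrite <- Csum_mull; auto. Qed.

Lemma dot_mv_adj n A x y : dot n x (mv n A y) = dot n (mv n (adj A) x) y.
Proof.
  unfold dot, mv, adj.
  transitivity (Csum n (fun i => Csum n (fun j => Cmul (Cconj (x i)) (Cmul (A i j) (y j))))).
  { apply Csum_ext; intros; rewrite <- Csum_mull; auto. }
  rewrite Csum_swap; apply Csum_ext; intros; rewrite Csum_conj, <- Csum_mulr.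
  apply Csum_ext; intros; rewrite Cconj_mul, Cconj_involutive; ring.
Qed.

Lemma Cconj_dot n x y : Cconj (dot n x y) = dot n y x.
Proof.
  unfold dot; rewrite Csum_conj; apply Csum_ext; intros.
  rewrite Cconj_mul, Cconj_involutive; ring.
Qed.

Lemma dot_mv_adj_l n A x y : dot n (mv n A x) y = dot n x (mv n (adj A) y).
Proof. rewrite dot_mv_adj, adj_involutive; reflexivity. Qed.

Lemma quad_madd n A B x : quad n (madd A B) x = Cadd (quad n A x) (quad n B x).
Proof.
  unfold quad, madd; rewrite <- Csum_add; apply Csum_ext; intros.
  rewrite <- Csum_add; apply Csum_ext; intros; ring.
Qed.

Lemma quad_msub n A B x : quad n (msub A B) x = Csub (quad n A x) (quad n B x).
Proof.
  unfold quad, msub, Csub; rewrite <- Csum_opp, <- Csum_add; apply Csum_ext; intros.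
  rewrite <- Csum_opp, <- Csum_add; apply Csum_ext; intros; ring.
Qed.

Lemma quad_mscale n c A x : quad n (mscale c A) x = Cmul (RtoC c) (quad n A x).
Proof.
  unfold quad, mscale; rewrite <- Csum_mull; apply Csum_ext; intros.
  rewrite <- Csum_mull; apply Csum_ext; intros; ring.
Qed.

(** * Functional calculus *)

Definition spectral (n : nat) (U : Mat) (d : nat -> R) : Mat :=
  mmul n (mmul n U (diagm d)) (adj U).

Lemma unitary_cancel_l n V A : unitary n V -> meq n (mmul n (adj V) (mmul n V A)) A.
Proof. intros HV; red in HV; rewrite <- mmul_assoc, HV; apply mmul_1l. Qed.

Lemma diagm_intertwine (f : R -> R) n d e W :
  meq n (mmul n (diagm e) W) (mmul n W (diagm d)) ->
  meq n (mmul n (diagm (fun k => f (e k))) W) (mmul n W (diagm (fun k => f (d k)))).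
Proof.
  rewrite !mmul_diagm_l, !mmul_diagm_r; intros H k l Hk Hl.
  specialize (H k l Hk Hl); cbv beta in *.
  (* entrywise e_k W_kl = W_kl d_l, so W_kl = 0 or e_k = d_l *)
  destruct (classic (W k l = C0)) as [->|HW]; [Csolve|].
  replace (e k) with (d l); [Csolve|].
  symmetry; apply Rminus_diag_uniq, (RtoC_mul_eq0 _ (W k l)); auto.
  unfold Rminus; rewrite RtoC_add, RtoC_opp.
  transitivity (Csub (Cmul (RtoC (e k)) (W k l)) (Cmul (W k l) (RtoC (d l)))); [ring|].
  rewrite H; unfold Csub; Csolve.
Qed.

Lemma unitary_coisometry n V X Xi B :
  unitary n V -> meq n (mmul n X Xi) idm -> meq n X (mmul n V B) ->
  meq n (mmul n V (adj V)) idm.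
Proof.
  intros HV HXi HX.
  transitivity (mmul n (mmul n V (adj V)) (mmul n X Xi)).
  - rewrite HXi; symmetry; apply mmul_1r.
  - rewrite <- HXi, HX, (mmul_assoc n V B Xi), mmul_assoc, unitary_cancel_l by exact HV.
    reflexivity.
Qed.

Section Spectral.
Variables (n : nat) (U : Mat) (d : nat -> R).
Hypotheses (HU : unitary n U) (HU' : meq n (mmul n U (adj U)) idm)
  (Hd : forall k, (k < n)%nat -> 0 < d k).

Lemma spectral_inverse : meq n (mmul n (spectral n U d) (spectral n U (fun k => / d k))) idm.
Proof.
  unfold spectral; rewrite !mmul_assoc, unitary_cancel_l by exact HU.
  rewrite <- (mmul_assoc n (diagm d)), diagm_mul.
  transitivity (mmul n U (mmul n idm (adj U))); [|rewrite mmul_1l; exact HU'].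
  apply mmul_mor; [reflexivity|]; apply mmul_mor; [|reflexivity].
  intros i j Hi _; unfold diagm, idm; rewrite Rinv_r by (specialize (Hd i Hi); lra).
  reflexivity.
Qed.

Lemma spectral_fun_unique (f : R -> R) X V e :
  meq n X (spectral n U d) -> unitary n V -> meq n X (spectral n V e) ->
  meq n (spectral n V (fun k => f (e k))) (spectral n U (fun k => f (d k))).
Proof.
  intros HXU HV HXV; unfold spectral in *.
  assert (HV' : meq n (mmul n V (adj V)) idm).
  { apply (unitary_coisometry n V X (spectral n U (fun k => / d k)) (mmul n (diagm e) (adj V)));
      auto; [rewrite HXU; apply spectral_inverse | rewrite HXV; apply mmul_assoc]. }
  set (W := mmul n (adj V) U).
  assert (HW : meq n (mmul n (diagm e) W) (mmul n W (diagm d))).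
  { transitivity (mmul n (adj V) (mmul n X U)).
    - rewrite HXV, !mmul_assoc, unitary_cancel_l by exact HV; reflexivity.
    - red in HU; rewrite HXU, !mmul_assoc, HU, mmul_1r; unfold W.
      symmetry; apply mmul_assoc. }
  apply (diagm_intertwine f) in HW.
  rewrite <- (mmul_1r n (mmul n (mmul n V _) (adj V))), <- HU'.
  rewrite !mmul_assoc, <- (mmul_assoc n (adj V) U); fold W.
  rewrite <- (mmul_assoc n (diagm _) W), HW; unfold W.
  rewrite !mmul_assoc, <- (mmul_assoc n V (adj V)), HV', mmul_1l; reflexivity.
Qed.

Lemma mpow_spectral r X : meq n X (spectral n U d) ->
  meq n (mpow n r X) (spectral n U (fun k => Rpower (d k) r)).
Proof.
  intros HX; unfold mpow, the_decomp.
  destruct (epsilon_spec (inhabits (idm, fun _ => 1)) (spec_decomp n X)) as (HV & _ & HXV).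
  { exists (U, d); repeat split; auto. }
  apply (spectral_fun_unique (fun t => Rpower t r) X); auto.
Qed.

End Spectral.

Lemma quad_spectral n U d x :
  quad n (spectral n U d) x = Csum n (fun k => RtoC (d k * Cnorm2 (mv n (adj U) x k))).
Proof.
  unfold spectral; rewrite quad_dot, !mv_mmul, dot_mv_adj, mv_diagm.
  apply Csum_ext; intros k _; unfold Cnorm2; destruct (mv n (adj U) x k); Csolve.
Qed.

Lemma pd_spectral n U d : meq n (mmul n U (adj U)) idm ->
  (forall k, (k < n)%nat -> 0 < d k) -> pd n (spectral n U d).
Proof.
  intros HU' Hd x; rewrite quad_spectral; set (y := mv n (adj U) x).
  assert (Hterm : forall k, (k < n)%nat ->
            Im (RtoC (d k * Cnorm2 (y k))) = 0 /\ 0 <= Re (RtoC (d k * Cnorm2 (y k)))).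
  { intros k Hk; simpl; split; [reflexivity|].
    apply Rmult_le_pos; [apply Rlt_le, Hd; auto | unfold Cnorm2; nra]. }
  split; [apply Csum_nonneg; auto|].
  intros [i [Hi Hxi]].
  destruct (classic (exists k, (k < n)%nat /\ y k <> C0)) as [[k [Hk Hyk]]|Hy0].
  - apply (Csum_pos n _ k); auto; simpl.
    apply Rmult_lt_0_compat; [apply Hd; auto | apply Cnorm2_pos; auto].
  - exfalso; apply Hxi.
    assert (Hx : veq n x (mv n U y)).
    { unfold y; rewrite <- mv_mmul, HU', mv_1; reflexivity. }
    rewrite Hx by auto; apply Csum_eq0; intros k Hk.
    destruct (classic (y k = C0)) as [->|]; [Csolve | exfalso; eauto].
Qed.

Lemma spectral_lincomb n U a b d e :
  meq n (madd (mscale a (spectral n U d)) (mscale b (spectral n U e)))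
        (spectral n U (fun k => a * d k + b * e k)).
Proof.
  intros i j Hi Hj; unfold madd, mscale, spectral; unfold mmul at 1 3 5.
  rewrite <- !Csum_mull, <- Csum_add; apply Csum_ext; intros m Hm.
  rewrite !mmul_diagm_r by auto; rewrite RtoC_add, !RtoC_mul; ring.
Qed.

Lemma spectral_adj n U d : meq n (adj (spectral n U d)) (spectral n U d).
Proof.
  unfold spectral; rewrite !adj_mmul, adj_involutive, adj_diagm, mmul_assoc; reflexivity.
Qed.

Lemma mv_spectral n U d z : unitary n U ->
  veq n (mv n (spectral n U d) (mv n U z)) (mv n U (mv n (diagm d) z)).
Proof.
  intros HU; red in HU; unfold spectral; rewrite !mv_mmul, <- (mv_mmul n (adj U)), HU, mv_1.
  reflexivity.
Qed.

Lemma quad_hermitian_sandwich n P Y z : meq n (adj P) P ->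
  quad n (mmul n (mmul n P Y) P) z = quad n Y (mv n P z).
Proof.
  intros HP; rewrite !quad_dot, !mv_mmul, dot_mv_adj, HP; reflexivity.
Qed.

Lemma quad_rank_one n Y u c x :
  meq n Y (fun a b => Cmul (RtoC c) (Cmul (u a) (Cconj (u b)))) ->
  quad n Y x = RtoC (c * Cnorm2 (dot n x u)).
Proof.
  intros HY; rewrite HY.
  transitivity (Cmul (RtoC c) (Cmul (dot n x u) (Cconj (dot n x u)))).
  - unfold quad, dot; rewrite Csum_conj, <- Csum_mulr, <- Csum_mull.
    apply Csum_ext; intros; rewrite <- !Csum_mull; apply Csum_ext; intros.
    rewrite Cconj_mul, Cconj_involutive; ring.
  - unfold Cnorm2; destruct (dot n x u); Csolve.
Qed.

Lemma quad_sandwich_rank_one n r Y u c U d z :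
  unitary n U -> meq n (mmul n U (adj U)) idm -> (forall k, (k < n)%nat -> 0 < d k) ->
  meq n Y (fun a b => Cmul (RtoC c) (Cmul (u a) (Cconj (u b)))) ->
  forall X, meq n X (spectral n U d) ->
  quad n (sandwich n r Y X) (mv n U z) =
  RtoC (c * Cnorm2 (dot n (mv n (diagm (fun k => Rpower (d k) r)) z) (mv n (adj U) u))).
Proof.
  intros HU HU' Hd HY X HX; unfold sandwich.
  rewrite (mpow_spectral n U d HU HU' Hd r X HX), quad_hermitian_sandwich by apply spectral_adj.
  rewrite (quad_rank_one n Y u c) by exact HY.
  rewrite mv_spectral, dot_mv_adj_l by exact HU; reflexivity.
Qed.

(** * A scalar counterexample *)

Definition pow_pair (r si sj a b : R) : R := Rpower a r * si + Rpower b r * sj.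

Lemma Rpower_1_l r : Rpower 1 r = 1.
Proof. unfold Rpower; rewrite ln_1, Rmult_0_r; apply exp_0. Qed.

Lemma Rpower_gt_0 x r : 0 < Rpower x r.
Proof. apply exp_pos. Qed.

Definition pow_pair_not_midconvex (r : R) : Prop :=
  exists a1 b1 a2 b2 si sj, 0 < a1 /\ 0 < b1 /\ 0 < a2 /\ 0 < b2 /\
    / 2 * pow_pair r si sj a1 b1 ^ 2 + / 2 * pow_pair r si sj a2 b2 ^ 2 <
    pow_pair r si sj (/ 2 * a1 + / 2 * a2) (/ 2 * b1 + / 2 * b2) ^ 2.

(* For r < 0 take s = (1,-1): the points (1,1) and (t,1) give 0 and less than 1, so their
   average is below 1/2, while their midpoint (T,1), with T^r = 1/4, gives 9/16. *)
Lemma pow_pair_not_midconvex_neg r : r < 0 -> pow_pair_not_midconvex r.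
Proof.
  intros Hr; set (T := Rpower 4 (- / r)).
  assert (HT : 1 < T).
  { unfold T; rewrite <- (Rpower_O 4) by lra; apply Rpower_lt; [lra|].
    pose proof (Rinv_lt_0_compat r Hr); lra. }
  assert (HTr : Rpower T r = / 4).
  { unfold T; rewrite Rpower_mult; replace (- / r * r) with (- (1)) by (field; lra).
    rewrite Rpower_Ropp, Rpower_1 by lra; reflexivity. }
  set (t := 2 * T - 1).
  assert (Htr : Rpower t r < 1).
  { unfold Rpower; rewrite <- exp_0; apply exp_increasing.
    assert (0 < ln t) by (rewrite <- ln_1; apply ln_increasing; unfold t; lra); nra. }
  exists 1, 1, t, 1, 1, (-1); repeat split; try (unfold t; lra).
  replace (/ 2 * 1 + / 2 * t) with T by (unfold t; field).
  replace (/ 2 * 1 + / 2 * 1) with 1 by field.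
  unfold pow_pair; rewrite HTr, !Rpower_1_l.
  pose proof (Rpower_gt_0 t r); nra.
Qed.

(* For 0 < r < 1 take s = (1,1): at (eps,1) and (1,eps) the form is (1 + eps^r)^2, while
   at the midpoint it is at least (2 (1/2)^r)^2 = (2^(1-r))^2; choose eps^r = (2^(1-r) - 1)/2. *)
Lemma pow_pair_not_midconvex_frac r : 0 < r < 1 -> pow_pair_not_midconvex r.
Proof.
  intros Hr; set (Q := Rpower 2 (1 - r)).
  assert (HQ : 1 < Q).
  { unfold Q; rewrite <- (Rpower_O 2) at 1 by lra; apply Rpower_lt; lra. }
  assert (Hhalf : 2 * Rpower (/ 2) r = Q).
  { unfold Q, Rpower; rewrite ln_Rinv by lra.
    replace ((1 - r) * ln 2) with (ln 2 + r * - ln 2) by ring.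
    rewrite exp_plus, exp_ln by lra; reflexivity. }
  set (del := (Q - 1) / 2); set (eps := Rpower del (/ r)).
  assert (Heps : Rpower eps r = del).
  { unfold eps; rewrite Rpower_mult; replace (/ r * r) with 1 by (field; lra).
    apply Rpower_1; unfold del; lra. }
  set (m := / 2 * eps + / 2 * 1).
  assert (Hmr : Rpower (/ 2) r <= Rpower m r).
  { apply Rle_Rpower_l; [lra|]; assert (0 < eps) by apply Rpower_gt_0; unfold m; lra. }
  exists eps, 1, 1, eps, 1, 1; repeat split; try apply Rpower_gt_0; try lra.
  replace (/ 2 * 1 + / 2 * eps) with m by (unfold m; lra).
  unfold pow_pair; fold m; rewrite Heps, !Rpower_1_l.
  assert (del + 1 < 2 * Rpower m r) by (unfold del; lra).
  assert (0 < del) by (unfold del; lra); nra.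
Qed.

(** * Positive semidefinite rank-one matrices *)

Definition vec2 (i k : nat) (a b : C) : Vec :=
  fun m => if m =? i then a else if m =? k then b else C0.

Lemma dot_vec2_l n i k a b y : (i < n)%nat -> (k < n)%nat -> i <> k ->
  dot n (vec2 i k a b) y = Cadd (Cmul (Cconj a) (y i)) (Cmul (Cconj b) (y k)).
Proof.
  intros; unfold dot; rewrite (Csum_pair n i k); auto.
  - unfold vec2; rewrite Nat.eqb_refl; destruct (Nat.eqb_spec k i); [lia|].
    rewrite Nat.eqb_refl; auto.
  - intros m _ Hmi Hmk; unfold vec2.
    destruct (Nat.eqb_spec m i); [lia|]; destruct (Nat.eqb_spec m k); [lia|]; Csolve.
Qed.

Lemma dot_vec2_r n i k a b x : (i < n)%nat -> (k < n)%nat -> i <> k ->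
  dot n x (vec2 i k a b) = Cadd (Cmul (Cconj (x i)) a) (Cmul (Cconj (x k)) b).
Proof.
  intros; rewrite <- Cconj_dot, dot_vec2_l by auto.
  rewrite Cconj_add, !Cconj_mul, !Cconj_involutive; ring.
Qed.

Lemma quad_outer n Y u w x : meq n Y (fun a b => Cmul (u a) (Cconj (w b))) ->
  quad n Y x = Cmul (dot n x u) (dot n w x).
Proof.
  intros HY; rewrite HY; unfold quad, dot; rewrite <- Csum_mulr.
  apply Csum_ext; intros; rewrite <- !Csum_mull; apply Csum_ext; intros; ring.
Qed.

(* Testing x^* u w^* x >= 0 on e_i, e_k, e_i + e_k and e_i + sqrt(-1) e_k forces
   w_i and w_k to be the same nonnegative multiple of u_i and u_k. *)
Lemma psd_outer_proportional n Y u w i k :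
  psd n Y -> meq n Y (fun a b => Cmul (u a) (Cconj (w b))) ->
  (i < n)%nat -> (k < n)%nat -> i <> k -> u i <> C0 ->
  let c := (Re (u i) * Re (w i) + Im (u i) * Im (w i)) / Cnorm2 (u i) in
  0 <= c /\ w i = Cmul (RtoC c) (u i) /\ w k = Cmul (RtoC c) (u k).
Proof.
  intros Hpsd HY Hi Hk Hik Hu c.
  pose proof (Cnorm2_pos _ Hu) as HN.
  assert (Q : forall a b, quad n Y (vec2 i k a b) =
     Cmul (Cadd (Cmul (Cconj a) (u i)) (Cmul (Cconj b) (u k)))
          (Cadd (Cmul (Cconj (w i)) a) (Cmul (Cconj (w k)) b))).
  { intros; rewrite (quad_outer n Y u w) by auto; rewrite dot_vec2_l, dot_vec2_r; auto. }
  destruct (Hpsd (vec2 i k C1 C0)) as [E0 T0]; rewrite Q in E0, T0.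
  destruct (Hpsd (vec2 i k C0 C1)) as [E1 _]; rewrite Q in E1.
  destruct (Hpsd (vec2 i k C1 C1)) as [E2 _]; rewrite Q in E2.
  destruct (Hpsd (vec2 i k C1 (mkC 0 1))) as [E3 _]; rewrite Q in E3.
  unfold c, Cnorm2 in *; clear Q Hpsd HY c.
  destruct (u i) as [a1 a2], (w i) as [A1 A2], (u k) as [b1 b2], (w k) as [B1 B2].
  simpl in *.
  assert (He1 : b1 * A1 + b2 * A2 - a1 * B1 - a2 * B2 = 0) by lra.
  assert (He2 : b2 * A1 - b1 * A2 + a2 * B1 - a1 * B2 = 0) by lra.
  assert (Hs : a2 * A1 - a1 * A2 = 0) by lra.
  split; [apply Rmult_le_pos; [nra | apply Rlt_le, Rinv_0_lt_compat; lra]|].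
  (* the remaining identities are linear combinations of these multiples *)
  pose proof (f_equal (Rmult a1) Hs); pose proof (f_equal (Rmult a2) Hs);
  pose proof (f_equal (Rmult b1) Hs); pose proof (f_equal (Rmult b2) Hs);
  pose proof (f_equal (Rmult a1) He1); pose proof (f_equal (Rmult a2) He1);
  pose proof (f_equal (Rmult a1) He2); pose proof (f_equal (Rmult a2) He2).
  split; apply C_ext; simpl; apply (Rmult_eq_reg_r (a1 * a1 + a2 * a2)); try lra;
    field_simplify; lra.
Qed.

Lemma other_index n i : (2 <= n)%nat -> exists j, (j < n)%nat /\ j <> i.
Proof. intros Hn; destruct (Nat.eq_dec i 0) as [->|]; [exists 1%nat | exists 0%nat]; lia. Qed.

Lemma psd_rank_one_scalar n Y : (2 <= n)%nat -> psd n Y -> rank_one n Y ->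
  exists u c i, (i < n)%nat /\ u i <> C0 /\ 0 < c /\
    meq n Y (fun a b => Cmul (RtoC c) (Cmul (u a) (Cconj (u b)))).
Proof.
  intros Hn Hpsd [u [w [[i [Hi Hui]] [[k0 [Hk0 Hwk0]] HY]]]].
  destruct (other_index n i Hn) as [j [Hj Hji]].
  destruct (psd_outer_proportional n Y u w i j) as (Hc & Hwi & _); auto.
  set (c := _ / _) in Hc, Hwi.
  assert (Hw : forall k, (k < n)%nat -> w k = Cmul (RtoC c) (u k)).
  { intros k Hk; destruct (Nat.eq_dec k i) as [->|]; auto.
    apply (psd_outer_proportional n Y u w i k); auto. }
  exists u, c, i; repeat split; auto.
  - destruct Hc as [|Hc0]; auto.
    exfalso; apply Hwk0; rewrite Hw, <- Hc0 by auto; Csolve.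
  - rewrite HY; intros a b _ Hb; rewrite (Hw b Hb), Cconj_mul, Cconj_RtoC; ring.
Qed.

Definition unit_vec (j : nat) : Vec := fun k => if k =? j then C1 else C0.

Lemma meq_of_mv n A B : (forall x, veq n (mv n A x) (mv n B x)) -> meq n A B.
Proof.
  intros H i j Hi Hj.
  assert (HA : forall M, mv n M (unit_vec j) i = M i j).
  { intros M; unfold mv; rewrite (Csum_single n j); auto.
    - unfold unit_vec; rewrite Nat.eqb_refl; Csolve.
    - intros k _ Hk; unfold unit_vec; destruct (Nat.eqb_spec k j); [lia|]; Csolve. }
  rewrite <- !HA; apply H; auto.
Qed.

(* The reflection [[c, s], [s, -c]] in the plane of the coordinates i and j. *)
Definition plane_reflection (i j : nat) (c s : R) : Mat := fun k l =>
  if k =? i then (if l =? i then RtoC c else if l =? j then RtoC s else C0)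
  else if k =? j then (if l =? i then RtoC s else if l =? j then RtoC (- c) else C0)
  else if k =? l then C1 else C0.

Definition reflect_vec (i j : nat) (c s : R) (x : Vec) : Vec := fun k =>
  if k =? i then Cadd (Cmul (RtoC c) (x i)) (Cmul (RtoC s) (x j))
  else if k =? j then Csub (Cmul (RtoC s) (x i)) (Cmul (RtoC c) (x j))
  else x k.

Ltac case_eqb := repeat match goal with
  | |- context [Nat.eqb ?a ?b] => destruct (Nat.eqb_spec a b); try subst; try lia
  end.

Section PlaneReflection.
Variables (n i j : nat) (c s : R).
Hypotheses (Hi : (i < n)%nat) (Hj : (j < n)%nat) (Hij : i <> j).

Lemma mv_plane_reflection x : veq n (mv n (plane_reflection i j c s) x) (reflect_vec i j c s x).
Proof.
  intros k Hk; unfold mv, reflect_vec.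
  destruct (Nat.eqb_spec k i) as [->|]; [|destruct (Nat.eqb_spec k j) as [->|]].
  - rewrite (Csum_pair n i j); auto.
    + unfold plane_reflection; case_eqb; auto.
    + intros m _ Hmi Hmj; unfold plane_reflection; case_eqb; Csolve.
  - rewrite (Csum_pair n i j); auto.
    + unfold plane_reflection, Csub; case_eqb; rewrite RtoC_opp; ring.
    + intros m _ Hmi Hmj; unfold plane_reflection; case_eqb; Csolve.
  - rewrite (Csum_single n k); auto.
    + unfold plane_reflection; case_eqb; unfold C1; destruct (x k); Csolve.
    + intros m _ Hmk; unfold plane_reflection; case_eqb; Csolve.
Qed.

Lemma plane_reflection_adj : meq n (adj (plane_reflection i j c s)) (plane_reflection i j c s).
Proof.
  intros k l _ _; unfold adj, plane_reflection; case_eqb; Csolve.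
Qed.

Hypothesis Hcs : c * c + s * s = 1.

Lemma plane_reflection_involutive :
  meq n (mmul n (plane_reflection i j c s) (plane_reflection i j c s)) idm.
Proof.
  apply meq_of_mv; intros x; rewrite mv_mmul, mv_1, !mv_plane_reflection.
  intros k Hk; unfold reflect_vec at 1; rewrite !mv_plane_reflection by auto.
  unfold reflect_vec, Csub; case_eqb; [| |reflexivity];
    destruct (x i) as [a1 a2], (x j) as [b1 b2]; apply C_ext; simpl;
    pose proof (f_equal (Rmult a1) Hcs); pose proof (f_equal (Rmult a2) Hcs);
    pose proof (f_equal (Rmult b1) Hcs); pose proof (f_equal (Rmult b2) Hcs); lra.
Qed.

Lemma plane_reflection_unitary : unitary n (plane_reflection i j c s) /\
  meq n (mmul n (plane_reflection i j c s) (adj (plane_reflection i j c s))) idm.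
Proof.
  unfold unitary; rewrite plane_reflection_adj; split; apply plane_reflection_involutive.
Qed.

End PlaneReflection.

(* If u_j = 0 the 45-degree reflection mixes u_i into both coordinates, otherwise
   diag(1, -1) already works. *)
Lemma plane_reflection_separates n i j u : (i < n)%nat -> (j < n)%nat -> i <> j ->
  u i <> C0 -> exists c s, c * c + s * s = 1 /\
    mv n (adj (plane_reflection i j c s)) u i <> C0 /\
    mv n (adj (plane_reflection i j c s)) u j <> C0.
Proof.
  intros Hi Hj Hij Hu.
  assert (Hl : forall c s k, (k < n)%nat ->
            mv n (adj (plane_reflection i j c s)) u k = reflect_vec i j c s u k).
  { intros c s k Hk; rewrite <- (mv_plane_reflection n i j c s Hi Hj Hij u k Hk).
    apply mv_mor; [apply plane_reflection_adj; auto | reflexivity | exact Hk]. }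
  assert (Hnz : forall x a, x <> 0 -> a <> C0 -> Cmul (RtoC x) a <> C0).
  { intros x a Hx Ha H; apply Hx, (RtoC_mul_eq0 x a); auto. }
  destruct (classic (u j = C0)) as [Huj|Huj].
  - set (h := sqrt (/ 2)).
    assert (Hh : h * h = / 2) by (apply sqrt_sqrt; lra).
    assert (Hh0 : h <> 0) by (apply Rgt_not_eq, sqrt_lt_R0; lra).
    exists h, h; rewrite !Hl by auto; unfold reflect_vec, Csub; rewrite Nat.eqb_refl, Huj.
    destruct (Nat.eqb_spec j i); [lia|]; rewrite Nat.eqb_refl.
    split; [lra|]; split; replace (Cadd _ _) with (Cmul (RtoC h) (u i)) by ring; auto.
  - exists 1, 0; rewrite !Hl by auto; unfold reflect_vec, Csub; rewrite Nat.eqb_refl.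
    destruct (Nat.eqb_spec j i); [lia|]; rewrite Nat.eqb_refl.
    split; [lra|]; split.
    + replace (Cadd _ _) with (u i) by Csolve; exact Hu.
    + replace (Cadd _ _) with (Cmul (RtoC (-1)) (u j)) by Csolve; apply Hnz; auto; lra.
Qed.

(* The test vector that makes [dot (diagm g z) l] real: on the coordinates i and j
   it is l rescaled to have inner product si, resp. sj, with l. *)
Definition align (i j : nat) (si sj : R) (l : Vec) : Vec := fun k =>
  if k =? i then Cmul (RtoC (si / Cnorm2 (l i))) (l i)
  else if k =? j then Cmul (RtoC (sj / Cnorm2 (l j))) (l j) else C0.

Lemma dot_diagm_align n i j si sj l g : (i < n)%nat -> (j < n)%nat -> i <> j ->
  l i <> C0 -> l j <> C0 ->
  dot n (mv n (diagm g) (align i j si sj l)) l = RtoC (g i * si + g j * sj).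
Proof.
  intros Hi Hj Hij Hli Hlj.
  assert (Hk : forall k x, (k < n)%nat -> l k <> C0 ->
    Cmul (Cconj (Cmul (RtoC (g k)) (Cmul (RtoC (x / Cnorm2 (l k))) (l k)))) (l k) =
    RtoC (g k * x)).
  { intros k x _ Hl; pose proof (Cnorm2_pos _ Hl) as HN; unfold Cnorm2 in *.
    destruct (l k); apply C_ext; simpl in *; field; lra. }
  rewrite mv_diagm; unfold dot; rewrite (Csum_pair n i j); auto.
  - unfold align; rewrite Nat.eqb_refl; destruct (Nat.eqb_spec j i); [lia|].
    rewrite Nat.eqb_refl, !Hk, RtoC_add by auto; reflexivity.
  - intros k _ Hki Hkj; unfold align.
    destruct (Nat.eqb_spec k i); [lia|]; destruct (Nat.eqb_spec k j); [lia|]; Csolve.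
Qed.

Definition diag2 (i j : nat) (a b : R) : nat -> R :=
  fun k => if k =? i then a else if k =? j then b else 1.

Lemma sandwich_rank_one_not_midconvex n r Y u c U i j :
  pow_pair_not_midconvex r -> (i < n)%nat -> (j < n)%nat -> i <> j ->
  unitary n U -> meq n (mmul n U (adj U)) idm -> 0 < c ->
  meq n Y (fun a b => Cmul (RtoC c) (Cmul (u a) (Cconj (u b)))) ->
  mv n (adj U) u i <> C0 -> mv n (adj U) u j <> C0 ->
  exists (X1 X2 : Mat) (lam : R),
    pd n X1 /\ pd n X2 /\ 0 <= lam <= 1 /\
    ~ loewner_le n
        (sandwich n r Y (madd (mscale lam X1) (mscale (1 - lam) X2)))
        (madd (mscale lam (sandwich n r Y X1))
              (mscale (1 - lam) (sandwich n r Y X2))).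
Proof.
  unfold pow_pair_not_midconvex; intros (a1 & b1 & a2 & b2 & si & sj & Ha1 & Hb1 & Ha2 & Hb2 & Hmid)
    Hi Hj Hij HU HU' Hc HY Hli Hlj.
  set (d1 := diag2 i j a1 b1); set (d2 := diag2 i j a2 b2).
  assert (Hpos : forall a b k, 0 < a -> 0 < b -> 0 < diag2 i j a b k).
  { intros a b k; unfold diag2; destruct (k =? i); [|destruct (k =? j)]; lra. }
  exists (spectral n U d1), (spectral n U d2), (/ 2).
  replace (1 - / 2) with (/ 2) by field.
  assert (Hd1 : forall k, (k < n)%nat -> 0 < d1 k) by (intros; apply Hpos; auto).
  assert (Hd2 : forall k, (k < n)%nat -> 0 < d2 k) by (intros; apply Hpos; auto).
  assert (Hdm : forall k, (k < n)%nat -> 0 < / 2 * d1 k + / 2 * d2 k).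
  { intros k Hk; specialize (Hd1 k Hk); specialize (Hd2 k Hk); lra. }
  split; [apply pd_spectral; auto|]; split; [apply pd_spectral; auto|]; split; [lra|].
  intros Hle; unfold loewner_le, psd in Hle; destruct (Hle (mv n U (align i j si sj (mv n (adj U) u)))) as [_ Hre].
  rewrite quad_msub, quad_madd, !quad_mscale in Hre.
  rewrite (quad_sandwich_rank_one n r Y u c U d1 _ HU HU' Hd1 HY _ (reflexivity _)),
    (quad_sandwich_rank_one n r Y u c U d2 _ HU HU' Hd2 HY _ (reflexivity _)),
    (quad_sandwich_rank_one n r Y u c U _ _ HU HU' Hdm HY _ (spectral_lincomb _ _ _ _ _ _))
    in Hre.
  rewrite !dot_diagm_align in Hre by auto.
  unfold d1, d2, diag2 in Hre; rewrite Nat.eqb_refl in Hre.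
  destruct (Nat.eqb_spec j i); [lia|]; rewrite Nat.eqb_refl in Hre.
  unfold pow_pair in Hmid; unfold Cnorm2, Csub in Hre; simpl in Hre; nra.
Qed.

Theorem lemma3p4 (r : R) (n : nat) (Y : Mat) :
  (r < 0 \/ (0 < r /\ r < 1)) ->
  (2 <= n)%nat ->
  psd n Y ->
  rank_one n Y ->
  exists (X1 X2 : Mat) (lam : R),
    pd n X1 /\ pd n X2 /\ 0 <= lam <= 1 /\
    ~ loewner_le n
        (sandwich n r Y (madd (mscale lam X1) (mscale (1 - lam) X2)))
        (madd (mscale lam (sandwich n r Y X1))
              (mscale (1 - lam) (sandwich n r Y X2))).
Proof.
  intros Hr Hn Hpsd Hrank.
  assert (Hmid : pow_pair_not_midconvex r)
    by (destruct Hr; [apply pow_pair_not_midconvex_neg | apply pow_pair_not_midconvex_frac]; auto).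
  destruct (psd_rank_one_scalar n Y Hn Hpsd Hrank) as (u & c & i & Hi & Hui & Hc & HY).
  destruct (other_index n i Hn) as [j [Hj Hji]].
  destruct (plane_reflection_separates n i j u) as (cs & sn & Hcs & Hli & Hlj); auto.
  destruct (plane_reflection_unitary n i j cs sn) as [HU HU']; auto.
  apply (sandwich_rank_one_not_midconvex n r Y u c (plane_reflection i j cs sn) i j); auto.
Qed.
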